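(* An incentive compatible mechanism $(f,p)$ is individually rational if and only if $p(0,1)\le 0$.
   Context: An agent has private type $(v,k)\in V\times K$, $V=[0,1]$, $K=(0,1]$, and from an outcome $(a_1,a_2,t)$ with $a_1,a_2\in[0,1]$ and $t\in\mathbb{R}$ (payment by the agent) gets utility $U_{(v,k)}(a_1,a_2,t)=v\min\{a_1/k,a_2\}-t$. A mechanism is a pair $(f,p)$ with $f=(f_1,f_2):V\times K\to[0,1]^2$, $p:V\times K\to\mathbb{R}$. It is incentive compatible if $U_{(v,k)}(f(v,k),p(v,k))\ge U_{(v,k)}(f(v',k'),p(v',k'))$ for all types $(v,k),(v',k')$, and individually rational if $U_{(v,k)}(f(v,k),p(v,k))\ge0$ for all $(v,k)$. *)

From Stdlib Require Import Reals.
Open Scope R_scope.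

Definition in_V (v : R) : Prop := 0 <= v <= 1.
Definition in_K (k : R) : Prop := 0 < k <= 1.
Definition is_type (v k : R) : Prop := in_V v /\ in_K k.

Definition U (v k a1 a2 t : R) : R := v * Rmin (a1 / k) a2 - t.

(* A mechanism: allocation f = (f1,f2) and payment p, as functions of (v,k).
   Only their values on the type space matter. *)
Definition valid_alloc (f1 f2 : R -> R -> R) : Prop :=
  forall v k, is_type v k ->
    0 <= f1 v k <= 1 /\ 0 <= f2 v k <= 1.

Definition incentive_compatible (f1 f2 p : R -> R -> R) : Prop :=
  forall v k v' k', is_type v k -> is_type v' k' ->
    U v k (f1 v k) (f2 v k) (p v k) >= U v k (f1 v' k') (f2 v' k') (p v' k').

Definition indiv_rational (f1 f2 p : R -> R -> R) : Prop :=
  forall v k, is_type v k -> U v k (f1 v k) (f2 v k) (p v k) >= 0.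

(* The zero-value type (0,1) gets utility -p(0,1), so IR forces p(0,1) <= 0.
   Conversely any type may report (0,1), and since values and allocations are
   nonnegative that report is worth at least -p(0,1) to it; IC then gives IR. *)
From Stdlib Require Import Reals Lra.
Open Scope R_scope.

Lemma is_type_0_1 : is_type 0 1.
Proof. unfold is_type, in_V, in_K; lra. Qed.

Lemma U_zero_value (k a1 a2 t : R) : U 0 k a1 a2 t = - t.
Proof. unfold U; ring. Qed.

Lemma U_ge_opp_payment (v k a1 a2 t : R) :
  0 <= v -> 0 < k -> 0 <= a1 -> 0 <= a2 -> - t <= U v k a1 a2 t.
Proof.
  intros Hv Hk Ha1 Ha2. unfold U.
  assert (Hmin : 0 <= Rmin (a1 / k) a2).
  { apply Rmin_glb; [apply Rle_mult_inv_pos|]; lra. }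
  pose proof (Rmult_le_pos _ _ Hv Hmin). lra.
Qed.

Theorem lemma2 (f1 f2 p : R -> R -> R) :
  valid_alloc f1 f2 -> incentive_compatible f1 f2 p ->
  (indiv_rational f1 f2 p <-> p 0 1 <= 0).
Proof.
  intros Hvalid Hic. split.
  - intros Hir. pose proof (Hir 0 1 is_type_0_1) as H.
    rewrite U_zero_value in H. lra.
  - intros Hp v k Hvk.
    pose proof (Hic v k 0 1 Hvk is_type_0_1) as Hmimic.
    destruct (Hvalid 0 1 is_type_0_1) as [[Ha1 _] [Ha2 _]].
    destruct Hvk as [[Hv _] [Hk _]].
    pose proof (U_ge_opp_payment v k _ _ (p 0 1) Hv Hk Ha1 Ha2). lra.
Qed.
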